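(* Let $P$ be a finite poset and $h$ any height function on $P$. Then the coefficients of $\mathsf{Z}_{P,h}(x)$ have no pole at $q=1$, and setting $q=1$ in them gives the classical Zeta polynomial $Z_P(x)$ of $P$, i.e. the unique polynomial with $Z_P(n)=\#\{(e_1,\dots,e_{n-1})\in P^{n-1}: e_1\le\cdots\le e_{n-1}\}$ for all integers $n\ge2$.
   Context: $q$ is an indeterminate; $[n]_q=(q^n-1)/(q-1)$. A height function is $h:P\to\mathbb{N}$ with $h(x)<h(y)$ whenever $y$ covers $x$. For a tuple $a$ of $k$ distinct nonnegative integers, $\mathsf{E}_a\in\mathbb{Q}(q)[x]$ is the unique polynomial with $\mathsf{E}_a([n]_q)=\sum_{m\in\mathbb{N}^k,\sum m_i=n}q^{\sum a_im_i}$ for $n\ge0$ (its specialization at $q=1$ is $\binom{x+k-1}{k-1}$). The $q$-Zeta polynomial is $\mathsf{Z}_{P,h}(x)=\sum_{k\ge1}\sum_{c_1<\cdots<c_k\text{ in }P}q^{\sum_i h(c_i)}\mathsf{E}_{(h(c_1),\dots,h(c_k))}((x-[k+1]_q)/q^{k+1})\in\mathbb{Q}(q)[x]$; it is the unique polynomial with $\mathsf{Z}_{P,h}([n]_q)=\sum_{e_1\le\cdots\le e_{n-1}}q^{\sum_j h(e_j)}$ for all $n\ge2$. *)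

From HB Require Import structures.
From mathcomp Require Import all_boot all_order all_algebra fraction.
Set Implicit Arguments. Unset Strict Implicit. Unset Printing Implicit Defensive.
Import Order.TTheory GRing.Theory Num.Theory.
Local Open Scope ring_scope.

Definition Qq := {fraction {poly rat}}.

Definition toQq (p : {poly rat}) : Qq := FracField.tofrac p.

Definition qvar : Qq := toQq 'X.

Definition qint (n : nat) : Qq := (qvar ^+ n - 1) / (qvar - 1).

Definition covers d (T : porderType d) (x y : T) : Prop :=
  (x < y)%O /\ forall z : T, ~ ((x < z)%O /\ (z < y)%O).

Definition height_function d (T : porderType d) (h : T -> nat) : Prop :=
  forall x y : T, covers x y -> (h x < h y)%N.

Definition multichain d (T : finPOrderType d) (m : nat) (t : m.-tuple T) : bool :=
  sorted (fun a b : T => (a <= b)%O) t.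

Definition is_qZeta d (T : finPOrderType d) (h : T -> nat) (Z : {poly Qq}) : Prop :=
  forall n : nat, (2 <= n)%N ->
    Z.[qint n] = \sum_(t : (n.-1).-tuple T | multichain t) qvar ^+ (\sum_(e <- t) h e).

Definition is_Zeta d (T : finPOrderType d) (Z : {poly rat}) : Prop :=
  forall n : nat, (2 <= n)%N ->
    Z.[n%:R] = #|[set t : (n.-1).-tuple T | multichain t]|%:R.

(* c in Q(q) has no pole at q = 1 and its value at q = 1 is v. *)
Definition eval_at_1 (c : Qq) (v : rat) : Prop :=
  exists a b : {poly rat}, b.[1] != 0 /\ c = toQq a / toQq b /\ v = a.[1] / b.[1].

From HB Require Import structures.
From mathcomp Require Import all_boot all_order all_algebra fraction.
From mathcomp Require Import ring.
Set Implicit Arguments. Unset Strict Implicit. Unset Printing Implicit Defensive.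
Import Order.TTheory GRing.Theory Num.Theory.
Local Open Scope ring_scope.

(* Let G_m(y) be the sum of q^(h e_1 + ... + h e_m) over the multichains
   y <= e_1 <= ... <= e_m. Splitting off e_1 gives
     G_(m+1)(y) = q^(h y) G_m(y) + sum_(z > y) q^(h z) G_m(z),
   and downward induction on y shows G_m(y) = P_y(q^m) for a polynomial P_y
   with no monomial of degree < h y: solving f(m+1) = q^a f(m) + r(q^m)
   coefficientwise divides by q^j - q^a, which never vanishes because h is
   strictly increasing, so r has no monomial of degree <= a.  Since
   q^m = (1 + (q - 1)[m+2]_q) / q^2, composing sum_y q^(h y) P_y with this
   affine map gives Z_(P,h).
   Conversely, Newton interpolation at the nodes [2]_q, [3]_q, ... recovers any
   such Z from its values; its divided differences have no pole at q = 1 since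
   [m]_q - [n]_q specializes to m - n <> 0, and specializing q = 1 turns the
   interpolation property of Z into that of Z_P. *)

Lemma finPOrder_gt_ind d (T : finPOrderType d) (P : T -> Prop) :
  (forall y, (forall z, (y < z)%O -> P z) -> P y) -> forall y, P y.
Proof.
move=> IH y; have [n] := ubnP #|[set z | (y < z)%O]|.
elim: n y => [|n IHn] y // lt_up_n; apply: IH => z lt_yz; apply: IHn.
rewrite -ltnS; apply: leq_trans lt_up_n; apply: proper_card; apply/properP; split.
  by apply/subsetP => w; rewrite !inE => /(lt_trans lt_yz).
by exists z; rewrite !inE ?lt_yz ?ltxx.
Qed.

Lemma finPOrder_lt_ind d (T : finPOrderType d) (P : T -> Prop) :
  (forall y, (forall z, (z < y)%O -> P z) -> P y) -> forall y, P y.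
Proof. exact: (@finPOrder_gt_ind _ T^d). Qed.

Lemma height_function_homo d (T : finPOrderType d) (h : T -> nat) :
  height_function h -> {homo h : x y / (x < y)%O >-> (x < y)%N}.
Proof.
move=> hh x; elim/finPOrder_gt_ind: x => x IHx y.
elim/finPOrder_lt_ind: y => y IHy lt_xy.
case: (pickP [pred w | (x < w < y)%O]) => [w /andP[lt_xw lt_wy] | no_mid].
  exact: ltn_trans (IHy w lt_wy lt_xw) (IHx w lt_xw y lt_wy).
by apply: hh; split => // z [lt_xz lt_zy]; have /= := no_mid z; rewrite lt_xz lt_zy.
Qed.

Lemma big_tuple_cons (R : Type) (idx : R) (op : Monoid.com_law idx)
    (T : finType) m (P : pred (m.+1.-tuple T)) (F : m.+1.-tuple T -> R) :
  \big[op/idx]_(t | P t) F t =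
  \big[op/idx]_(x : T) \big[op/idx]_(t : m.-tuple T | P [tuple of x :: t])
     F [tuple of x :: t].
Proof.
rewrite pair_big_dep (reindex (fun p : T * m.-tuple T => [tuple of p.1 :: p.2])) //=.
apply: onW_bij; exists (fun t => (thead t, [tuple of behead t])) => [[x t]|t] /=.
  by congr pair; apply: val_inj.
by rewrite -tuple_eta.
Qed.

Lemma multichain_cons d (T : finPOrderType d) m x (t : m.-tuple T) :
  multichain [tuple of x :: t] = all (>= x)%O t && multichain t.
Proof. by rewrite /multichain /= path_sortedE //; exact: le_trans. Qed.

Section MultichainSums.
Variables (d : Order.disp_t) (T : finPOrderType d) (R : comPzRingType).
Variables (h : T -> nat) (q : R).

Definition mc_weight m (t : m.-tuple T) : R := q ^+ (\sum_(e <- t) h e).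

Definition mcsum_above m (y : T) : R :=
  \sum_(t : m.-tuple T | multichain t && all (>= y)%O t) mc_weight t.

Lemma mc_weight_cons m x (t : m.-tuple T) :
  mc_weight [tuple of x :: t] = q ^+ h x * mc_weight t.
Proof. by rewrite /mc_weight big_cons exprD. Qed.

Lemma mcsum_cons m :
  \sum_(t : m.+1.-tuple T | multichain t) mc_weight t =
  \sum_x q ^+ h x * mcsum_above m x.
Proof.
rewrite big_tuple_cons; apply: eq_bigr => x _.
rewrite mulr_sumr; apply: eq_big => [t|t _]; last exact: mc_weight_cons.
by rewrite multichain_cons andbC.
Qed.

Lemma mcsum_aboveS m y :
  mcsum_above m.+1 y =
  q ^+ h y * mcsum_above m y + \sum_(z | (y < z)%O) q ^+ h z * mcsum_above m z.
Proof.
have above_y x : (y <= x)%O ->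
    \sum_(t : m.-tuple T | multichain [tuple of x :: t] && all (>= y)%O (x :: t))
       mc_weight [tuple of x :: t] = q ^+ h x * mcsum_above m x.
  move=> le_yx; rewrite mulr_sumr; apply: eq_big => [t|t _]; last exact: mc_weight_cons.
  rewrite multichain_cons /= le_yx andbC /=.
  case: (boolP (all (>= x)%O t)) => [all_x | _]; last by rewrite !andbF.
  have all_y : all (>= y)%O t by apply: sub_all all_x => z /(le_trans le_yx).
  by rewrite all_y andbT.
rewrite /mcsum_above big_tuple_cons (bigID (>= y)%O) /= [X in _ + X]big1 ?addr0.
  rewrite (bigD1 y) //= above_y //; congr (_ + _).
  by apply: eq_big => [z|z /andP[le_yz _]]; [rewrite lt_def andbC | exact: above_y].
by move=> x /negbTE nle_yx; apply: big1 => t; rewrite /= nle_yx andbF.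
Qed.

End MultichainSums.

Section QRecurrence.
Variables (F : fieldType) (q : F).
Hypothesis q_expn_inj : injective (GRing.exp q).

(* The solution is sum_j r_j / (q^j - q^a) X^j plus a multiple of X^a fixed
   by f 0. *)
Lemma qrecurrence_poly a (r : {poly F}) (f : nat -> F) :
    (forall j, (j <= a)%N -> r`_j = 0) ->
    (forall m, f m.+1 = q ^+ a * f m + r.[q ^+ m]) ->
  exists2 p : {poly F}, (forall j, (j < a)%N -> p`_j = 0) & forall m, f m = p.[q ^+ m].
Proof.
move=> r_low f_rec.
pose p0 := \poly_(j < size r) (r`_j / (q ^+ j - q ^+ a)).
have p0_rec Y : p0.[q * Y] = q ^+ a * p0.[Y] + r.[Y].
  rewrite !(@horner_coef_wide _ (size r) p0) ?size_poly //.
  rewrite (horner_coef_wide _ (leqnn _)) mulr_sumr -big_split /=.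
  apply: eq_bigr => j _; rewrite coef_poly ltn_ord exprMn.
  have [->|neq_ja] := eqVneq (j : nat) a.
    by rewrite r_low // !(mul0r, mulr0, addr0).
  have qja_neq0 : q ^+ j - q ^+ a != 0.
    by rewrite subr_eq0; apply: contra_neq neq_ja => /q_expn_inj.
  by field.
pose p := p0 + (f 0%N - p0.[1]) *: 'X^a.
have p_rec Y : p.[q * Y] = q ^+ a * p.[Y] + r.[Y].
  by rewrite !hornerE exprMn p0_rec; ring.
exists p => [j lt_ja | ].
  rewrite coefD coefZ coefXn coef_poly (ltn_eqF lt_ja) mulr0 addr0.
  by case: ifP => // _; rewrite r_low ?mul0r // ltnW.
elim=> [|m IHm]; first by rewrite !hornerE expr1n mulr1 addrC subrK.
by rewrite f_rec IHm exprS p_rec.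
Qed.

End QRecurrence.

Lemma mcsum_above_poly d (T : finPOrderType d) (h : T -> nat) (F : fieldType) (q : F) :
    height_function h -> injective (GRing.exp q) ->
  forall y, exists2 P : {poly F},
    (forall j, (j < h y)%N -> P`_j = 0) & forall m, mcsum_above h q m y = P.[q ^+ m].
Proof.
move=> hh q_expn_inj; elim/finPOrder_gt_ind => y IHy.
have /fin_all_exists [P P_above] : forall z : T, exists P : {poly F}, (y < z)%O ->
    (forall j, (j < h z)%N -> P`_j = 0) /\ forall m, mcsum_above h q m z = P.[q ^+ m].
  move=> z; have [lt_yz|_] := boolP (y < z)%O; last by exists 0.
  by have [P P_low PE] := IHy z lt_yz; exists P.
apply: (qrecurrence_poly q_expn_inj (r := \sum_(z | (y < z)%O) q ^+ h z *: P z)).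
  move=> j le_jy; rewrite coef_sum big1 // => z lt_yz.
  rewrite coefZ (proj1 (P_above z lt_yz)) ?mulr0 //.
  exact: leq_ltn_trans le_jy (height_function_homo hh lt_yz).
move=> m; rewrite mcsum_aboveS horner_sum; congr (_ + _); apply: eq_bigr => z lt_yz.
by rewrite hornerZ (proj2 (P_above z lt_yz)).
Qed.

Lemma qvar_expn_inj : injective (GRing.exp qvar).
Proof.
move=> i j /eqP; rewrite /qvar /toQq -!rmorphXn tofrac_eq => /eqP E.
by have := congr1 (size : {poly rat} -> nat) E; rewrite !size_polyXn => -[].
Qed.

Lemma qvar_neq0 : qvar != 0.
Proof. by rewrite /qvar /toQq tofrac_eq0 polyX_eq0. Qed.

Lemma qvar_sub1_neq0 : qvar - 1 != 0.
Proof. by rewrite /qvar /toQq -tofrac1 -tofracB tofrac_eq0 -polyC1 polyXsubC_eq0. Qed.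

Lemma qvar_sub1_mul_qint n : (qvar - 1) * qint n = qvar ^+ n - 1.
Proof. by rewrite /qint mulrC divfK // qvar_sub1_neq0. Qed.

Lemma qZeta_exists d (T : finPOrderType d) (h : T -> nat) :
  height_function h -> exists Z : {poly Qq}, is_qZeta h Z.
Proof.
move=> hh.
have /fin_all_exists [P P_mcsum] : forall y : T,
    exists P : {poly Qq}, forall m, mcsum_above h qvar m y = P.[qvar ^+ m].
  by move=> y; have [P _ PE] := mcsum_above_poly hh qvar_expn_inj y; exists P.
pose L : {poly Qq} := (qvar ^+ 2)^-1 *: (1 + (qvar - 1) *: 'X).
have L_qint m : L.[qint m.+2] = qvar ^+ m.
  rewrite hornerZ hornerD hornerZ hornerX hornerC qvar_sub1_mul_qint addrC subrK.
  by rewrite mulrC -[m.+2]addn2 exprD mulfK // expf_neq0 // qvar_neq0.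
exists ((\sum_y qvar ^+ h y *: P y) \Po L) => -[|[|m]] // _.
rewrite horner_comp L_qint horner_sum.
rewrite -[RHS]/(\sum_(t : m.+1.-tuple T | multichain t) mc_weight h qvar t) mcsum_cons.
by apply: eq_bigr => y _; rewrite hornerZ P_mcsum.
Qed.

Lemma toQq_neq0 (b : {poly rat}) : b.[1] != 0 -> toQq b != 0.
Proof.
by apply: contra_neq => /eqP; rewrite /toQq tofrac_eq0 => /eqP->; rewrite horner0.
Qed.

Lemma eval_at_1_unique c v w : eval_at_1 c v -> eval_at_1 c w -> v = w.
Proof.
move=> [a [b [b1 [-> ->]]]] [a' [b' [b'1 [E ->]]]].
have /eqP : toQq (a * b') = toQq (a' * b).
  rewrite /toQq !rmorphM /=; apply/eqP; rewrite -eqr_div ?toQq_neq0 //; exact/eqP.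
rewrite /toQq tofrac_eq => /eqP/(congr1 (horner^~ 1)) /=; rewrite !hornerM => E1.
by apply/eqP; rewrite eqr_div // E1.
Qed.

Lemma eval_at_1_toQq p : eval_at_1 (toQq p) p.[1].
Proof. by exists p, 1; rewrite hornerC oner_neq0 /toQq tofrac1 !divr1. Qed.

Lemma eval_at_1_nat n : eval_at_1 n%:R n%:R.
Proof. by have := eval_at_1_toQq n%:R; rewrite /toQq rmorph_nat -polyC_natr hornerC. Qed.

Lemma eval_at_1D c c' v v' :
  eval_at_1 c v -> eval_at_1 c' v' -> eval_at_1 (c + c') (v + v').
Proof.
move=> [a [b [b1 [-> ->]]]] [a' [b' [b'1 [-> ->]]]].
exists (a * b' + a' * b), (b * b'); rewrite hornerM mulf_neq0 //.
by rewrite /toQq rmorphD !rmorphM /= addf_div ?toQq_neq0 // !hornerE addf_div.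
Qed.

Lemma eval_at_1B c c' v v' :
  eval_at_1 c v -> eval_at_1 c' v' -> eval_at_1 (c - c') (v - v').
Proof.
move=> Ec [a [b [b1 [-> ->]]]]; apply: eval_at_1D Ec _.
by exists (- a), b; rewrite /toQq rmorphN hornerN !mulNr.
Qed.

Lemma eval_at_1M c c' v v' :
  eval_at_1 c v -> eval_at_1 c' v' -> eval_at_1 (c * c') (v * v').
Proof.
move=> [a [b [b1 [-> ->]]]] [a' [b' [b'1 [-> ->]]]].
exists (a * a'), (b * b'); rewrite !hornerM mulf_neq0 //.
by rewrite /toQq !rmorphM /= !mulf_div.
Qed.

Lemma eval_at_1V c v : eval_at_1 c v -> v != 0 -> eval_at_1 c^-1 v^-1.
Proof.
move=> [a [b [b1 [-> ->]]]] v_neq0.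
exists b, a; rewrite !invf_div; split=> //.
by apply: contra_neq v_neq0 => ->; rewrite mul0r.
Qed.

Lemma eval_at_1X c v n : eval_at_1 c v -> eval_at_1 (c ^+ n) (v ^+ n).
Proof.
move=> Ec; elim: n => [|n IHn]; first exact: (eval_at_1_nat 1).
by rewrite !exprS; apply: eval_at_1M.
Qed.

Lemma eval_at_1_sum (I : Type) (r : seq I) (P : pred I) (F : I -> Qq) (G : I -> rat) :
    (forall i, P i -> eval_at_1 (F i) (G i)) ->
  eval_at_1 (\sum_(i <- r | P i) F i) (\sum_(i <- r | P i) G i).
Proof.
move=> FG; apply: (big_ind2 eval_at_1) => //; first exact: (eval_at_1_nat 0).
by move=> *; apply: eval_at_1D.
Qed.

Lemma qint_toQq n : qint n = toQq (\sum_(i < n) 'X^i).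
Proof.
apply: (mulfI qvar_sub1_neq0); rewrite qvar_sub1_mul_qint.
by rewrite /qvar /toQq -tofrac1 -tofracB -rmorphM /= -subrX1 rmorphB rmorphXn.
Qed.

Lemma eval_at_1_qint n : eval_at_1 (qint n) n%:R.
Proof.
have := eval_at_1_toQq (\sum_(i < n) 'X^i).
rewrite -qint_toQq horner_sum (eq_bigr (fun=> 1)) ?sumr_const ?card_ord // => i _.
by rewrite hornerXn expr1n.
Qed.

Definition poly_eval_at_1 (Z : {poly Qq}) (Z0 : {poly rat}) :=
  forall i, eval_at_1 Z`_i Z0`_i.

Lemma poly_eval_at_1D Z Z' W W' :
  poly_eval_at_1 Z W -> poly_eval_at_1 Z' W' -> poly_eval_at_1 (Z + Z') (W + W').
Proof. by move=> ZW ZW' i; rewrite !coefD; apply: eval_at_1D. Qed.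

Lemma poly_eval_at_1M Z Z' W W' :
  poly_eval_at_1 Z W -> poly_eval_at_1 Z' W' -> poly_eval_at_1 (Z * Z') (W * W').
Proof.
by move=> ZW ZW' i; rewrite !coefM; apply: eval_at_1_sum => j _; apply: eval_at_1M.
Qed.

Lemma poly_eval_at_1C c v : eval_at_1 c v -> poly_eval_at_1 c%:P v%:P.
Proof.
by move=> cv i; rewrite !coefC; case: (i == 0)%N => //; exact: (eval_at_1_nat 0).
Qed.

Lemma poly_eval_at_1_XsubC c v : eval_at_1 c v -> poly_eval_at_1 ('X - c%:P) ('X - v%:P).
Proof.
move=> cv i; rewrite !coefB !coefX; apply: eval_at_1B (eval_at_1_nat _) _.
exact: poly_eval_at_1C.
Qed.

Lemma poly_eval_at_1_horner Z W c v :
  poly_eval_at_1 Z W -> eval_at_1 c v -> eval_at_1 Z.[c] W.[v].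
Proof.
move=> ZW cv; pose n := maxn (size Z) (size W).
rewrite (@horner_coef_wide _ n Z) ?leq_maxl // (@horner_coef_wide _ n W) ?leq_maxr //.
by apply: eval_at_1_sum => i _; apply: eval_at_1M (ZW i) (eval_at_1X _ cv).
Qed.

Lemma eval_at_1_divided_difference (Z : {poly Qq}) m n v w : m != n ->
    eval_at_1 Z.[qint m] v -> eval_at_1 Z.[qint n] w ->
  eval_at_1 (Z %/ ('X - (qint n)%:P)).[qint m] ((v - w) / (m%:R - n%:R)).
Proof.
move=> neq_mn Zm Zn.
have dmn := eval_at_1B (eval_at_1_qint m) (eval_at_1_qint n).
have dmn_neq0 : m%:R - n%:R != 0 :> rat by rewrite subr_eq0 eqr_nat.
have dqint_neq0 : qint m - qint n != 0.
  apply: contra_neq dmn_neq0 => d0; apply: (eval_at_1_unique dmn).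
  by rewrite d0; exact: (eval_at_1_nat 0).
have -> : (Z %/ ('X - (qint n)%:P)).[qint m]
          = (Z.[qint m] - Z.[qint n]) / (qint m - qint n).
  rewrite {2}(divp_eq Z ('X - (qint n)%:P)) modp_XsubC.
  by rewrite hornerD hornerM hornerXsubC hornerC addrK mulfK.
exact: eval_at_1M (eval_at_1B Zm Zn) (eval_at_1V dmn dmn_neq0).
Qed.

Lemma poly_eval_at_1_interpolation k s (Z : {poly Qq}) : (size Z <= k)%N ->
    (forall i, (i < k)%N -> exists v, eval_at_1 Z.[qint (s + i)] v) ->
  exists Z0, poly_eval_at_1 Z Z0.
Proof.
elim: k s Z => [|k IHk] s Z size_Z Z_nodes.
  exists 0; move: size_Z; rewrite leqn0 size_poly_eq0 => /eqP-> i.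
  by rewrite !coef0; exact: (eval_at_1_nat 0).
have [w Zs] := Z_nodes 0%N isT; rewrite addn0 in Zs.
have [Z1 Z1_spec] : exists Z1, poly_eval_at_1 (Z %/ ('X - (qint s)%:P)) Z1.
  apply: (IHk s.+1) => [|i lt_ik].
    by rewrite size_divp ?polyXsubC_eq0 // size_XsubC leq_subLR add1n.
  have [v Zv] := Z_nodes i.+1 lt_ik; rewrite -addSnnS in Zv.
  eexists; apply: eval_at_1_divided_difference Zv Zs.
  by rewrite gtn_eqF // addSn ltnS leq_addr.
exists (Z1 * ('X - s%:R%:P) + w%:P).
rewrite {1}(divp_eq Z ('X - (qint s)%:P)) modp_XsubC.
apply: poly_eval_at_1D (poly_eval_at_1C Zs).
exact: poly_eval_at_1M Z1_spec (poly_eval_at_1_XsubC (eval_at_1_qint s)).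
Qed.

Lemma eval_at_1_multichain_sum d (T : finPOrderType d) (h : T -> nat) m :
  eval_at_1 (\sum_(t : m.-tuple T | multichain t) qvar ^+ (\sum_(e <- t) h e))
            #|[set t : m.-tuple T | multichain t]|%:R.
Proof.
rewrite cardsE -sum1_card natr_sum; apply: eval_at_1_sum => t _.
have := eval_at_1_toQq 'X^(\sum_(e <- t) h e).
by rewrite hornerXn expr1n /toQq rmorphXn.
Qed.

Lemma qZeta_eval_at_1 d (T : finPOrderType d) (h : T -> nat) (Z : {poly Qq}) :
  is_qZeta h Z -> exists Z0 : {poly rat}, is_Zeta T Z0 /\ poly_eval_at_1 Z Z0.
Proof.
move=> qZeta_Z; have [Z0 ZZ0] : exists Z0, poly_eval_at_1 Z Z0.
  apply: (@poly_eval_at_1_interpolation (size Z) 2 Z (leqnn _)) => i _.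
  by eexists; rewrite qZeta_Z //; exact: eval_at_1_multichain_sum.
exists Z0; split=> // n le2n.
apply: eval_at_1_unique (poly_eval_at_1_horner ZZ0 (eval_at_1_qint n)) _.
by rewrite qZeta_Z //; exact: eval_at_1_multichain_sum.
Qed.

Theorem mainTheorem19 (d : Order.disp_t) (T : finPOrderType d) (h : T -> nat)
  (hh : height_function h) :
  (exists Z : {poly Qq}, is_qZeta h Z) /\
  forall Z : {poly Qq}, is_qZeta h Z ->
    exists Z0 : {poly rat}, is_Zeta T Z0 /\
      forall i : nat, eval_at_1 Z`_i Z0`_i.
Proof. by split; [exact: qZeta_exists | exact: qZeta_eval_at_1]. Qed.
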